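(* Let $V=\bigoplus_{n\in\mathbb{Z}}V_n$ be an $\mathcal{H}$-module vertex algebra such that $V_n=0$ for $n<0$. Suppose $(\cdot,\cdot)$ is a bilinear form on $V$ such that $(Y(v,z)w,w')=(w,Y(e^{zL_1}(-z^{-2})^{\deg}v,z^{-1})w')$ for all $v,w,w'\in V$, and $(V_m,V_n)=0$ for all $m\ne n$. Then $(\cdot,\cdot)$ is symmetric.
   Context: Throughout, $\mathbb{F}$ is an algebraically closed field of odd prime characteristic $p$; vertex algebras are over $\mathbb{F}$. Every vertex algebra $V$ is a module for the bialgebra $\mathcal{B}$ with basis $\{\mathcal{D}^{(n)}\}_{n\in\mathbb{N}}$, $\mathcal{D}^{(m)}\mathcal{D}^{(n)}=\binom{m+n}{n}\mathcal{D}^{(m+n)}$, via $\mathcal{D}^{(n)}v=v_{-n-1}\mathbf{1}$. $\mathcal{H}$: let $\mathfrak{sl}_2$ over $\mathbb{C}$ have basis $L_{-1},L_0,L_1$ with $[L_1,L_{-1}]=2L_0$, $[L_0,L_{\pm1}]=\mp L_{\pm1}$; put $L_{\pm1}^{(n)}=L_{\pm1}^n/n!$, $L_0^{(n)}=\binom{-2L_0}{n}$ in $U(\mathfrak{sl}_2)$; $U(\mathfrak{sl}_2)_{\mathbb{Z}}$ is the $\mathbb{Z}$-span of the $L_{-1}^{(i)}L_0^{(j)}L_1^{(k)}$, and $\mathcal{H}=\mathbb{F}\otimes_{\mathbb{Z}}U(\mathfrak{sl}_2)_{\mathbb{Z}}$. $e^{zL_{\pm1}}=\sum_{n\ge0}z^nL_{\pm1}^{(n)}$.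 For $v$ homogeneous of degree $n$, $f(z)^{\deg}v:=f(z)^nv$, extended linearly. A $\mathbb{Z}$-graded vertex algebra: $V=\bigoplus V_n$, $\mathbf{1}\in V_0$, $u_rV_n\subset V_{m+n-r-1}$ for $u\in V_m$. A $\mathbb{Z}$-graded weight $\mathcal{H}$-module: $W=\bigoplus W_n$ with $\mathcal{H}$-action, $L_{\pm1}^{(r)}W_n\subset W_{n\mp r}$, $L_0^{(r)}|_{W_n}=\binom{-2n}{r}$. An $\mathcal{H}$-module vertex algebra: a $\mathbb{Z}$-graded vertex algebra $V$ which is a $\mathbb{Z}$-graded weight $\mathcal{H}$-module with $L_{-1}^{(n)}=\mathcal{D}^{(n)}$, such that $V_n=0$ for $n\ll0$, $L_1^{(n)}\mathbf{1}=\delta_{n,0}\mathbf{1}$, and $e^{zL_1}Y(v,z_0)e^{-zL_1}=Y\bigl(e^{z(1-zz_0)L_1}(1-zz_0)^{-2\deg}v,z_0/(1-zz_0)\bigr)$ for $v\in V$. *)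

From HB Require Import structures.
From mathcomp Require Import all_boot all_order all_algebra.
Set Implicit Arguments. Unset Strict Implicit. Unset Printing Implicit Defensive.
Import Order.TTheory GRing.Theory Num.Theory.
Local Open Scope ring_scope.

(* Generalized binomial coefficient binom(a, k) for a : int, k : nat:
   a (a-1) ... (a-k+1) / k!.  For a = -(b+1):  (-1)^k * C(b+k, k). *)
Definition binz (a : int) (k : nat) : int :=
  match a with
  | Posz n => ('C(n, k))%:Z
  | Negz n => (-1) ^+ k * ('C((n + k)%N, k))%:Z
  end.

Section Defs.
Variables (F : fieldType) (V : lmodType F).

(* A Z-grading V = (+)_n V_n, given by the family of subspaces Vg n = V_n
   (Vg n v  means  v is homogeneous of degree n). *)
Definition is_Zgrading (Vg : int -> V -> Prop) : Prop :=
  (forall n, Vg n 0) /\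
  (forall n (a : F) x y, Vg n x -> Vg n y -> Vg n (a *: x + y)) /\
  (forall v, exists (s : seq int) (f : int -> V),
      (forall k, Vg k (f k)) /\ v = \sum_(k <- s) f k) /\
  (forall (s : seq int) (f : int -> V), uniq s -> (forall k, Vg k (f k)) ->
      \sum_(k <- s) f k = 0 -> forall k, k \in s -> f k = 0).

(* Y n u v  is the mode  u_n v,  i.e.  Y(u,z)v = sum_n (Y n u v) z^{-n-1}.
   Vertex algebra axioms (over a field): bilinearity, truncation, vacuum,
   creation, and the Jacobi identity in its component (Borcherds) form
     sum_i binom(m,i) (u_{l+i} v)_{m+n-i} w
       = sum_i (-1)^i binom(l,i) (u_{l+m-i} v_{n+i} w - (-1)^l v_{l+n-i} u_{m+i} w).
   The (finitely supported) infinite sums are expressed as partial sums over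
   any range i < K beyond which all the relevant modes vanish. *)
Definition is_vertex_algebra (Y : int -> V -> V -> V) (vac : V) : Prop :=
  (forall n (a : F) u u' v, Y n (a *: u + u') v = a *: Y n u v + Y n u' v) /\
  (forall n (a : F) u v v', Y n u (a *: v + v') = a *: Y n u v + Y n u v') /\
  (forall u v, exists N : int, forall n, N <= n -> Y n u v = 0) /\
  (forall n v, Y n vac v = if n == -1 then v else 0) /\
  (forall v, Y (-1) v vac = v) /\
  (forall n v, 0 <= n -> Y n v vac = 0) /\
  (forall u v w (l m n : int) (K : nat),
      (forall i : nat, (K <= i)%N ->
         [/\ Y (l + i%:Z) u v = 0, Y (n + i%:Z) v w = 0 & Y (m + i%:Z) u w = 0]) ->
      \sum_(i < K) (binz m i)%:~R *: Y (m + n - i%:Z) (Y (l + i%:Z) u v) w =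
      \sum_(i < K) ((-1) ^+ i * (binz l i)%:~R) *:
          (Y (l + m - i%:Z) u (Y (n + i%:Z) v w)
           - (-1) ^+ (absz l) *: Y (l + n - i%:Z) v (Y (m + i%:Z) u w))).

(* D^{(n)} v = v_{-n-1} 1 ; this is also L_{-1}^{(n)}. *)
Definition Dop (Y : int -> V -> V -> V) (vac : V) (n : nat) (v : V) : V :=
  Y (- (n%:Z) - 1) v vac.

Definition is_Zgraded_VA (Y : int -> V -> V -> V) (vac : V)
    (Vg : int -> V -> Prop) : Prop :=
  is_vertex_algebra Y vac /\ is_Zgrading Vg /\ Vg 0 vac /\
  (forall m n r u v, Vg m u -> Vg n v -> Vg (m + n - r - 1) (Y r u v)).

(* Z-graded weight H-module structure on V in which L_{-1}^{(n)} = Lm1 n and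
   L_1^{(n)} = L1 n; L_0^{(r)} acts on V_n by binom(-2n, r) (hence is determined
   by the grading).  The H-action is encoded by Kostant's divided-power
   relations of U(sl_2)_Z on weight modules (with e = L_1, f = -L_{-1},
   h = -2 L_0):
     L_1^{(m)} L_{-1}^{(n)} w
       = sum_{k <= min(m,n)} (-1)^k binom(m - n - 2d, k) L_{-1}^{(n-k)} L_1^{(m-k)} w
   for w in V_d. *)
Definition is_Zgraded_weight_H_module (Vg : int -> V -> Prop)
    (Lm1 L1 : nat -> V -> V) : Prop :=
  (forall r (a : F) x y, L1 r (a *: x + y) = a *: L1 r x + L1 r y) /\
  (forall r (a : F) x y, Lm1 r (a *: x + y) = a *: Lm1 r x + Lm1 r y) /\
  (forall v, L1 0 v = v) /\ (forall v, Lm1 0 v = v) /\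
  (forall m n v, L1 m (L1 n v) = ('C((m + n)%N, n))%:R *: L1 (m + n)%N v) /\
  (forall m n v, Lm1 m (Lm1 n v) = ('C((m + n)%N, n))%:R *: Lm1 (m + n)%N v) /\
  (forall d r v, Vg d v -> Vg (d - r%:Z) (L1 r v)) /\
  (forall d r v, Vg d v -> Vg (d + r%:Z) (Lm1 r v)) /\
  (forall d m n w, Vg d w ->
     L1 m (Lm1 n w) =
     \sum_(k < (minn m n).+1)
        ((-1) ^+ k * (binz (m%:Z - n%:Z - 2 * d) k)%:~R) *:
          Lm1 (n - k)%N (L1 (m - k)%N w)).

(* Componentwise form of the conjugation formula
     e^{zL_1} Y(v,z_0) e^{-zL_1}
        = Y(e^{z(1-zz_0)L_1}(1-zz_0)^{-2deg} v, z_0/(1-zz_0)),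
   obtained by taking the coefficient of z^k z_0^{-n-1} (v homogeneous of
   degree d; the general case follows by linearity). *)
Definition L1_conjugation (Y : int -> V -> V -> V) (Vg : int -> V -> Prop)
    (L1 : nat -> V -> V) : Prop :=
  forall d v, Vg d v -> forall w (k : nat) (n : int),
    \sum_(a < k.+1) (-1) ^+ (k - a)%N *: L1 a (Y n v (L1 (k - a)%N w)) =
    \sum_(i < k.+1) ((-1) ^+ i * (binz (k%:Z - 2 * d + n + 1) i)%:~R) *:
        Y (n + i%:Z) (L1 (k - i)%N v) w.

Definition is_H_module_VA (Y : int -> V -> V -> V) (vac : V)
    (Vg : int -> V -> Prop) (L1 : nat -> V -> V) : Prop :=
  is_Zgraded_VA Y vac Vg /\
  is_Zgraded_weight_H_module Vg (Dop Y vac) L1 /\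
  (exists N : int, forall n, n < N -> forall v, Vg n v -> v = 0) /\
  (forall n, L1 n vac = if n == 0%N then vac else 0) /\
  L1_conjugation Y Vg L1.

Definition is_bilinear_form (form : V -> V -> F) : Prop :=
  (forall (a : F) x y z, form (a *: x + y) z = a * form x z + form y z) /\
  (forall (a : F) x y z, form z (a *: x + y) = a * form z x + form z y).

(* Invariance  (Y(v,z)w, w') = (w, Y(e^{zL_1}(-z^{-2})^{deg} v, z^{-1}) w'),
   componentwise: for v in V_d, the coefficient of z^{-n-1} gives
     (v_n w, w') = (-1)^d sum_{j>=0} (w, (L_1^{(j)} v)_{2d-n-2-j} w'),
   the sum over j being finite (taken over any range j < K beyond which
   L_1^{(j)} v = 0). *)
Definition is_invariant_form (Y : int -> V -> V -> V) (Vg : int -> V -> Prop)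
    (L1 : nat -> V -> V) (form : V -> V -> F) : Prop :=
  forall d v, Vg d v -> forall w w' (n : int) (K : nat),
    (forall j, (K <= j)%N -> L1 j v = 0) ->
    form (Y n v w) w' =
    (-1) ^+ (absz d) * \sum_(j < K) form w (Y (2 * d - n - 2 - j%:Z) (L1 j v) w').

End Defs.

From HB Require Import structures.
From mathcomp Require Import all_boot all_order all_algebra.
From mathcomp Require Import zify.
Set Implicit Arguments. Unset Strict Implicit. Unset Printing Implicit Defensive.
Import Order.TTheory GRing.Theory Num.Theory.
Local Open Scope ring_scope.

(* By bilinearity and orthogonality it suffices to compare (w, u) and (u, w)
   for u, w in the same V_d, d >= 0.  Writing w = w_{-1} 1 and applying
   invariance moves w to the right: (w, u) is a signed sum of
   (1, (L_1^{(j)} w)_{2d-1-j} u), whose right entries lie in V_0.  On V_0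
   invariance gives (1, x) = (x, 1), and a second application of invariance
   moves L_1^{(j)} w back to the right, producing
   (w, u) = sum_j (-1)^j sum_s binom(s, j) (u, D^{(s)} L_1^{(s)} w).
   Binomial inversion collapses this to the term s = 0, which is (u, w). *)

Lemma sum_sign_binomial (R : comPzRingType) (N s : nat) : (s < N)%N ->
  \sum_(j < N) (-1) ^+ j * ('C(s, j))%:R = (s == 0%N)%:R :> R.
Proof.
move=> lt_sN; rewrite -(subnKC lt_sN) big_split_ord /=.
rewrite [X in _ + X]big1 ?addr0; last first.
  by move=> i _; rewrite bin_small ?mulr0 // ltnS leq_addr.
transitivity ((1 - 1 : R) ^+ s); last by rewrite subrr expr0n.
by rewrite exprBn; apply: eq_bigr => i _; rewrite !expr1n !mulr1 mulr_natr.
Qed.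

Lemma sum_binomial_shift (R : comPzRingType) (N j : nat) (T : nat -> R) :
  (forall s, (N <= s)%N -> T s = 0) ->
  \sum_(k < N) ('C(k + j, j))%:R * T (k + j)%N = \sum_(s < N) ('C(s, j))%:R * T s.
Proof.
move=> T_N.
transitivity (\sum_(s < j + N) ('C(s, j))%:R * T s).
  rewrite big_split_ord /= [X in _ = X + _]big1 ?add0r; last first.
    by move=> i _; rewrite bin_small ?mul0r.
  by apply: eq_bigr => i _; rewrite addnC.
rewrite addnC big_split_ord /= [X in _ + X]big1 ?addr0 //.
by move=> i _; rewrite T_N ?mulr0 // leq_addr.
Qed.

Lemma binomial_inversion0 (R : comPzRingType) (N : nat) (T : nat -> R) :
  (0 < N)%N -> (forall s, (N <= s)%N -> T s = 0) ->
  \sum_(j < N) (-1) ^+ j * \sum_(k < N) ('C(k + j, j))%:R * T (k + j)%N = T 0%N.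
Proof.
move=> N_gt0 T_N.
under eq_bigr => j _ do rewrite sum_binomial_shift // mulr_sumr.
rewrite exchange_big /=.
transitivity (\sum_(s < N) (\sum_(j < N) (-1) ^+ j * ('C(s, j))%:R) * T s).
  by apply: eq_bigr => s _; rewrite big_distrl; apply: eq_bigr => j _; rewrite mulrA.
under eq_bigr => s _ do rewrite (sum_sign_binomial _ (ltn_ord s)).
case: N N_gt0 T_N => // N _ _.
by rewrite big_ord_recl /= mul1r big1 ?addr0 // => i _; rewrite mul0r.
Qed.

Section BilinearForm.
Variables (F : fieldType) (V : lmodType F) (form : V -> V -> F).
Hypothesis form_bilinear : is_bilinear_form form.

Lemma formDl x y z : form (x + y) z = form x z + form y z.
Proof. by have := form_bilinear.1 1 x y z; rewrite scale1r mul1r. Qed.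

Lemma formDr x y z : form z (x + y) = form z x + form z y.
Proof. by have := form_bilinear.2 1 x y z; rewrite scale1r mul1r. Qed.

Lemma form0l z : form 0 z = 0.
Proof. by have := form_bilinear.1 (-1) 0 0 z; rewrite scaleN1r addNr mulN1r addNr. Qed.

Lemma form0r z : form z 0 = 0.
Proof. by have := form_bilinear.2 (-1) 0 0 z; rewrite scaleN1r addNr mulN1r addNr. Qed.

Lemma formZr z a x : form z (a *: x) = a * form z x.
Proof. by have := form_bilinear.2 a x 0 z; rewrite !addr0 form0r addr0. Qed.

Lemma form_suml (I : Type) (r : seq I) (h : I -> V) z :
  form (\sum_(i <- r) h i) z = \sum_(i <- r) form (h i) z.
Proof. exact: (big_morph (form^~ z) (fun x y => formDl x y z) (form0l z)). Qed.

Lemma form_sumr (I : Type) (r : seq I) (h : I -> V) z :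
  form z (\sum_(i <- r) h i) = \sum_(i <- r) form z (h i).
Proof. exact: (big_morph (form z) (fun x y => formDr x y z) (form0r z)). Qed.

Lemma form_sym_of_homogeneous (Vg : int -> V -> Prop) :
  (forall v, exists (s : seq int) (f : int -> V),
     (forall k, Vg k (f k)) /\ v = \sum_(k <- s) f k) ->
  (forall m n x y, Vg m x -> Vg n y -> form x y = form y x) ->
  forall u v, form u v = form v u.
Proof.
move=> Vg_span form_sym_hom u v.
have [s [f [Vf ->]]] := Vg_span u; have [t [g [Vg_g ->]]] := Vg_span v.
rewrite form_suml [RHS]form_sumr.
under eq_bigr => k _ do rewrite form_sumr.
under [RHS]eq_bigr => k _ do rewrite form_suml.
by apply: eq_bigr => k _; apply: eq_bigr => l _; apply: form_sym_hom.
Qed.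

End BilinearForm.

Section InvariantForm.
Variables (F : fieldType) (V : lmodType F) (vac : V) (Y : int -> V -> V -> V).
Variables (Vg : int -> V -> Prop) (L1 : nat -> V -> V) (form : V -> V -> F).

Hypothesis Y_linearl :
  forall n (a : F) u u' v, Y n (a *: u + u') v = a *: Y n u v + Y n u' v.
Hypothesis Y_creation : forall v, Y (-1) v vac = v.
Hypothesis Y_graded :
  forall m n r u v, Vg m u -> Vg n v -> Vg (m + n - r - 1) (Y r u v).
Hypothesis L1_0 : forall v, L1 0 v = v.
Hypothesis L1_L1 :
  forall m n v, L1 m (L1 n v) = ('C((m + n)%N, n))%:R *: L1 (m + n)%N v.
Hypothesis L1_graded : forall d r v, Vg d v -> Vg (d - r%:Z) (L1 r v).
Hypothesis Vg_neg : forall n : int, n < 0 -> forall v, Vg n v -> v = 0.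
Hypothesis form_bilinear : is_bilinear_form form.
Hypothesis form_invariant : is_invariant_form Y Vg L1 form.

Lemma Y0l n v : Y n 0 v = 0.
Proof. by have := Y_linearl n (-1) 0 0 v; rewrite !scaleN1r !addNr. Qed.

Lemma YZl n a u v : Y n (a *: u) v = a *: Y n u v.
Proof. by have := Y_linearl n a u 0 v; rewrite !addr0 Y0l addr0. Qed.

Lemma L1_gt_deg (d : nat) v : Vg d%:Z v -> forall j, (d < j)%N -> L1 j v = 0.
Proof. by move=> v_d j lt_dj; apply: Vg_neg (L1_graded j v_d); lia. Qed.

Lemma form_vac_sym0 x : Vg 0 x -> form vac x = form x vac.
Proof.
move=> x_0; have := form_invariant x_0 vac vac (-1) (L1_gt_deg x_0).
by rewrite Y_creation big_ord1 L1_0 expr0 mul1r Y_creation.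
Qed.

Lemma form_expand_vacl (d : nat) w u : Vg d%:Z w ->
  form w u = (-1) ^+ d *
    \sum_(j < d.+1) form vac (Y (2 * d%:Z - 1 - j%:Z) (L1 j w) u).
Proof.
move=> w_d; have := form_invariant w_d vac u (-1) (L1_gt_deg w_d).
rewrite Y_creation => ->; congr (_ * _); apply: eq_bigr => j _.
by congr (form _ (Y _ _ _)); lia.
Qed.

Lemma form_expand_vacr (d j : nat) w u : Vg d%:Z w -> (j <= d)%N ->
  form (Y (2 * d%:Z - 1 - j%:Z) (L1 j w) u) vac = (-1) ^+ (d - j) *
    \sum_(k < d.+1) ('C(k + j, j))%:R * form u (Dop Y vac (k + j) (L1 (k + j) w)).
Proof.
move=> w_d le_jd.
have L1jw_d : Vg (d - j)%N (L1 j w) by rewrite -subzn //; apply: L1_graded.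
have L1_L1jw k : (d.+1 <= k)%N -> L1 k (L1 j w) = 0.
  move=> lt_dk; rewrite L1_L1 (L1_gt_deg w_d) ?scaler0 //.
  by rewrite (leq_trans lt_dk) ?leq_addr.
rewrite (form_invariant L1jw_d u vac _ L1_L1jw) /=; congr (_ * _).
apply: eq_bigr => k _; rewrite L1_L1 YZl formZr //.
by congr (_ * form _ (Y _ _ _)); lia.
Qed.

Lemma form_sym_homogeneous_nat (d : nat) u w :
  Vg d%:Z u -> Vg d%:Z w -> form w u = form u w.
Proof.
move=> u_d w_d; pose T s := form u (Dop Y vac s (L1 s w)).
have T_gt_deg s : (d.+1 <= s)%N -> T s = 0.
  by move=> lt_ds; rewrite /T (L1_gt_deg w_d) // /Dop Y0l form0r.
have <- : T 0%N = form u w by rewrite /T /Dop L1_0 Y_creation.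
rewrite -(binomial_inversion0 (ltn0Sn d) T_gt_deg) (form_expand_vacl u w_d).
rewrite mulr_sumr; apply: eq_bigr => j _ /=.
have le_jd : (j <= d)%N by rewrite -ltnS.
have Yw_u_0 : Vg 0 (Y (2 * d%:Z - 1 - j%:Z) (L1 j w) u).
  have := Y_graded (2 * d%:Z - 1 - j%:Z) (L1_graded j w_d) u_d.
  by congr (Vg _ _); lia.
rewrite form_vac_sym0 // form_expand_vacr // mulrA; congr (_ * _).
by rewrite -{1}(subnK le_jd) exprD mulrC signrMK.
Qed.

Hypothesis form_orthogonal :
  forall (m n : int) u v, m != n -> Vg m u -> Vg n v -> form u v = 0.

Lemma form_sym_homogeneous m n u v : Vg m u -> Vg n v -> form u v = form v u.
Proof.
move=> u_m; have [<- v_m | neq_mn v_n] := eqVneq m n; last first.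
  by rewrite (form_orthogonal neq_mn u_m v_n) (form_orthogonal _ v_n u_m) // eq_sym.
case: m u_m v_m => [d | d] u_d v_d; first exact: form_sym_homogeneous_nat v_d u_d.
have -> : u = 0 by apply: Vg_neg u_d.
by rewrite (form0l form_bilinear) (form0r form_bilinear).
Qed.

End InvariantForm.

Theorem lemma4p5 (F : closedFieldType) (p : nat) (V : lmodType F) (vac : V)
    (Y : int -> V -> V -> V) (Vg : int -> V -> Prop) (L1 : nat -> V -> V)
    (form : V -> V -> F) :
  prime p -> odd p -> p \in [pchar F] ->
  is_H_module_VA Y vac Vg L1 ->
  (forall n : int, n < 0 -> forall v, Vg n v -> v = 0) ->
  is_bilinear_form form ->
  is_invariant_form Y Vg L1 form ->
  (forall (m n : int) u v, m != n -> Vg m u -> Vg n v -> form u v = 0) ->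
  forall u v, form u v = form v u.
Proof.
move=> _ _ _ [[VA [Vg_grading [_ Y_graded]]] [H_module _]] Vg_neg form_bil
  form_inv form_orth.
have [Y_linearl [_ [_ [_ [Y_creation _]]]]] := VA.
have [_ [_ [Vg_span _]]] := Vg_grading.
have [_ [_ [L1_0 [_ [L1_L1 [_ [L1_graded _]]]]]]] := H_module.
apply: (form_sym_of_homogeneous form_bil Vg_span).
exact: (form_sym_homogeneous Y_linearl Y_creation Y_graded L1_0 L1_L1 L1_graded
  Vg_neg form_bil form_inv form_orth).
Qed.
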